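(* Let $\alpha,\beta$ be compositions with $\beta\subseteq\alpha$ such that $\alpha/\beta$ is reduced and $\beta$ is a partition (i.e. $\beta_1\ge\beta_2\ge\cdots$). Then $\mathrm{SET}(\alpha/\beta)$ has a unique minimal element, $S^{\mathrm{col}}_{\alpha/\beta}$. Equivalently, $\mathrm{SET}(\alpha/\beta)$ coincides with the interval $[S^{\mathrm{col}}_{\alpha/\beta},S^{\mathrm{row}}_{\alpha/\beta}]$ of $\mathrm{SIT}(\alpha/\beta)$, and its rank is $\binom{|\alpha/\beta|}{2}-\sum_{c\in\alpha/\beta}\mathrm{ls}(c)$.
   Context: A composition $\alpha=(\alpha_1,\ldots,\alpha_k)$ is a finite sequence of positive integers, $|\alpha|=\sum\alpha_i$. Its diagram has rows numbered from the bottom (row 1 lowest), row $i$ consisting of the cells in columns $1,\ldots,\alpha_i$. For $\beta\subseteq\alpha$ (i.e. $\ell(\beta)\le\ell(\alpha)$, $\beta_j\le\alpha_j$), the skew diagram $\alpha/\beta$ consists of the cells in row $i$, column $j$ with $\beta_i<j\le\alpha_i$ ($\beta_i=0$ for $i>\ell(\beta)$); $n=|\alpha/\beta|$. $\alpha/\beta$ is reduced if it has no empty row (no $i$ with $\alpha_i=\beta_i$). $\mathrm{SIT}(\alpha/\beta)$: bijective fillings of $\alpha/\beta$ with $1,\ldots,n$ with rows increasing left to right and column-1 entries increasing bottom to top. $\mathrm{SET}(\alpha/\beta)\subseteq\mathrm{SIT}(\alpha/\beta)$: fillings with all rows increasing left to right and all columns increasing bottom to top. For $1\le i\le n-1$,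 $\pi_i(T)=T$ if $i+1$ is in a strictly higher row than $i$, $\pi_i(T)=s_i(T)$ (swap $i$ and $i+1$) if $i+1$ is in a strictly lower row than $i$, and $\pi_i(T)=0$ otherwise. The poset order on $\mathrm{SIT}(\alpha/\beta)$: $T\le T'$ iff $T'$ is obtained from $T$ by a sequence of operators $\pi_i$ (all intermediate results nonzero); this poset is graded with rank function given by the number of inversions of the reading word, and $\mathrm{SET}(\alpha/\beta)$ has the induced order. $S^{\mathrm{row}}_{\alpha/\beta}$ is filled with $1,\ldots,n$ consecutively along rows left to right, from the bottom row upward; $S^{\mathrm{col}}_{\alpha/\beta}$ is filled consecutively along columns bottom to top, from the leftmost column rightward. For a cell $c$, $\mathrm{ls}(c)$ is the number of cells of $\alpha/\beta$ other than $c$ weakly southwest of $c$. *)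

From mathcomp Require Import all_boot.
Set Implicit Arguments. Unset Strict Implicit. Unset Printing Implicit Defensive.

(* Conventions: a composition is a [seq nat] with positive entries;
   alpha_i is [nth 0 a i] with rows indexed from 0 (row 0 = paper's row 1,
   the bottom row); columns are 1-indexed as in the paper.
   A cell is a pair (row, column). *)

Definition composition (a : seq nat) : bool := all (fun x => 0 < x) a.

Definition subcomp (b a : seq nat) : Prop :=
  size b <= size a /\ forall j, nth 0 b j <= nth 0 a j.

(* alpha/beta has no empty row *)
Definition reduced (a b : seq nat) : Prop :=
  forall i, i < size a -> nth 0 b i != nth 0 a i.

Definition is_partition (b : seq nat) : bool := sorted geq b.

Definition cells (a b : seq nat) : seq (nat * nat) :=
  flatten [seq [seq (r, j) | j <- iota (nth 0 b r).+1 (nth 0 a r - nth 0 b r)]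
          | r <- iota 0 (size a)].

Definition skew_size (a b : seq nat) : nat := size (cells a b).

(* A filling is stored as the list of its rows (bottom row first), each row
   listing the entries of its cells from left to right. *)
Definition tab := seq (seq nat).

Definition mkT (a b : seq nat) (f : nat * nat -> nat) : tab :=
  [seq [seq f (r, j) | j <- iota (nth 0 b r).+1 (nth 0 a r - nth 0 b r)]
  | r <- iota 0 (size a)].

Definition entry (b : seq nat) (T : tab) (c : nat * nat) : nat :=
  nth 0 (nth [::] T c.1) (c.2 - (nth 0 b c.1).+1).

Definition is_filling (a b : seq nat) (T : tab) : Prop :=
  [/\ size T = size a,
      (forall r, r < size a -> size (nth [::] T r) = nth 0 a r - nth 0 b r)
    & perm_eq (flatten T) (iota 1 (skew_size a b))].

Definition rows_increasing (T : tab) : bool := all (sorted ltn) T.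

Definition SIT (a b : seq nat) (T : tab) : Prop :=
  [/\ is_filling a b T, rows_increasing T &
      forall r r', r < r' -> r' < size a -> nth 0 b r = 0 -> nth 0 b r' = 0 ->
        entry b T (r, 1) < entry b T (r', 1)].

Definition SET (a b : seq nat) (T : tab) : Prop :=
  [/\ is_filling a b T, rows_increasing T &
      forall c c', c \in cells a b -> c' \in cells a b ->
        c.2 = c'.2 -> c.1 < c'.1 -> entry b T c < entry b T c'].

Definition rowof (T : tab) (v : nat) : nat := find (fun row => v \in row) T.

Definition swap_i (i : nat) (T : tab) : tab :=
  map (map (fun x => if x == i then i.+1 else if x == i.+1 then i else x)) T.

(* pi_i ; [None] stands for 0 *)
Definition pi_op (i : nat) (T : tab) : option tab :=
  if rowof T i < rowof T i.+1 then Some T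
  else if rowof T i.+1 < rowof T i then Some (swap_i i T)
  else None.

Definition pi_step (a b : seq nat) (T T' : tab) : Prop :=
  exists i, [/\ 1 <= i, i <= (skew_size a b).-1 & pi_op i T = Some T'].

Inductive sit_le (a b : seq nat) : tab -> tab -> Prop :=
| sit_le_refl T : sit_le a b T T
| sit_le_step T T' T'' : pi_step a b T T' -> sit_le a b T' T'' -> sit_le a b T T''.

Definition S_row (a b : seq nat) : tab :=
  mkT a b (fun c => (count (fun c' : nat * nat =>
             (c'.1 < c.1) || ((c'.1 == c.1) && (c'.2 < c.2))) (cells a b)).+1).

Definition S_col (a b : seq nat) : tab :=
  mkT a b (fun c => (count (fun c' : nat * nat =>
             (c'.2 < c.2) || ((c'.2 == c.2) && (c'.1 < c.1))) (cells a b)).+1).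

Definition ls (a b : seq nat) (c : nat * nat) : nat :=
  count (fun c' : nat * nat => [&& c' != c, c'.1 <= c.1 & c'.2 <= c.2]) (cells a b).

Definition SET_minimal (a b : seq nat) (T : tab) : Prop :=
  SET a b T /\ forall T', SET a b T' -> sit_le a b T' T -> T' = T.

Fixpoint strict_chain (a b : seq nat) (s : seq tab) : Prop :=
  match s with
  | x :: ((y :: _) as t) => (sit_le a b x y /\ x <> y) /\ strict_chain a b t
  | _ => True
  end.

Definition SET_rank (a b : seq nat) (r : nat) : Prop :=
  (exists s, [/\ size s = r.+1, (forall T, T \in s -> SET a b T) & strict_chain a b s])
  /\ (forall s, (forall T, T \in s -> SET a b T) -> strict_chain a b s -> size s <= r.+1).

From mathcomp Require Import all_boot zify.
Set Implicit Arguments. Unset Strict Implicit. Unset Printing Implicit Defensive.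

(* On fillings with increasing rows, the order generated by the operators pi_i
   is a weak order: T <= U exactly when every inversion of U (a pair of cells
   c strictly below d with U d < U c) is an inversion of T.  A nontrivial pi_i
   removes exactly one inversion; conversely, if T < U, a descent through the
   values of T finds an adjacent pair i, i+1, with i+1 in a lower row, whose
   order U reverses, and swapping it moves T toward U.  For a partition beta,
   the column condition of SET becomes S_col <= T, and every filling lies below
   S_row; so SET is the interval [S_col, S_row] and its rank is the number of
   inversions of S_col. *)

Lemma nth_map_dflt (T1 T2 : Type) (f : T1 -> T2) x0 y0 s k :
  f x0 = y0 -> nth y0 (map f s) k = f (nth x0 s k).
Proof.
move=> <-; case: (ltnP k (size s)) => Hk; first exact: nth_map.
by rewrite !nth_default ?size_map.
Qed.

Lemma uniq_map_inj_in (T1 T2 : eqType) (f : T1 -> T2) (s : seq T1) :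
  uniq (map f s) -> {in s &, injective f}.
Proof.
elim: s => [//|x s IH] /= /andP[fx_notin uniq_fs] c d.
rewrite !inE => /orP[/eqP->|cs] /orP[/eqP->|ds] //.
- by move=> E; move: fx_notin; rewrite E map_f.
- by move=> E; move: fx_notin; rewrite -E map_f.
- exact: IH.
Qed.

Lemma count_lt_iota k m len :
  count (fun v => v < k) (iota m len) = minn len (k - m).
Proof.
elim: len m => [|len IH] m /=; first by rewrite min0n.
by rewrite IH; case: ltnP => /=; lia.
Qed.

Lemma count_allpairs (S T : Type) (P : pred (S * T)) (s : seq S) (t : seq T) :
  count P [seq (x, y) | x <- s, y <- t] = \sum_(x <- s) count (fun y => P (x, y)) t.
Proof.
elim: s => [|x s IH] /=; first by rewrite big_nil.
by rewrite count_cat big_cons IH count_map.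
Qed.

Lemma count_succ_at (T : eqType) (p q : pred T) (s : seq T) z :
  uniq s -> z \in s -> p z -> ~~ q z -> {in s, forall w, w != z -> p w = q w} ->
  count p s = (count q s).+1.
Proof.
move=> uniq_s zs pz qNz pq.
rewrite !(permP (perm_to_rem zs)) /= pz (negbTE qNz) add1n add0n; congr S.
apply: eq_in_count => w; rewrite (mem_rem_uniq _ uniq_s) inE => /andP[wz ws].
exact: pq.
Qed.

Lemma sum_count_tournament (T : eqType) (P : rel T) (s : seq T) :
  uniq s -> irreflexive P -> (forall x y, x != y -> P x y != P y x) ->
  \sum_(x <- s) count (P x) s = 'C(size s, 2).
Proof.
move=> + P_irr P_tot; elim: s => [|x s IH] /=; first by rewrite big_nil.
case/andP=> xNs uniq_s; rewrite big_cons /= P_irr add0n.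
have -> : \sum_(y <- s) count (P y) (x :: s) =
          count (P^~ x) s + \sum_(y <- s) count (P y) s.
  rewrite (eq_bigr (fun y => P y x + count (P y) s)) // big_split /=.
  by rewrite -sum1_count [in RHS]big_mkcond.
rewrite IH // binS bin1 addnA -count_predUI.
have one_way y : y \in s -> (P x y || P y x) && ~~ (P x y && P y x).
  move=> ys; have xy : x != y by apply: contraNneq xNs => ->.
  by move: (P_tot _ _ xy); case: (P x y); case: (P y x).
rewrite (eq_in_count (a2 := predT)) ?count_predT; last first.
  by move=> y /one_way /andP[].
rewrite (eq_in_count (a2 := pred0)) ?count_pred0; last first.
  by move=> y /one_way /andP[_ /negbTE].
by rewrite addn0 addnC.
Qed.

Lemma sorted_geq_nth (s : seq nat) i j :
  sorted geq s -> i <= j -> nth 0 s j <= nth 0 s i.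
Proof.
move=> sorted_s ij; case: (ltnP j (size s)) => js; last by rewrite nth_default.
have geq_trans : transitive (geq : rel nat) by move=> y x z /= xy yz; exact: leq_trans yz xy.
by apply: (sorted_leq_nth geq_trans leqnn) => //; rewrite inE; lia.
Qed.

Lemma exists_descent (h : nat -> nat) m k :
  m <= k -> h k < h m -> exists2 j, m <= j < k & h j.+1 < h j.
Proof.
elim: k => [|k IH]; first by rewrite leqn0 => /eqP->; rewrite ltnn.
rewrite leq_eqVlt => /orP[/eqP-> | mk]; first by rewrite ltnn.
case: (ltnP (h k.+1) (h k)) => [desc _|hk hkm]; first by exists k => //; lia.
have [j jm hj] := IH mk (leq_ltn_trans hk hkm).
by exists j => //; lia.
Qed.

Lemma sub_in_count (T : eqType) (p q : pred T) (s : seq T) :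
  {in s, subpred p q} -> count p s <= count q s.
Proof.
elim: s => //= x s IH pq; apply: leq_add.
  by case px: (p x); rewrite // pq ?mem_head.
by apply: IH => z zs; apply: pq; rewrite inE zs orbT.
Qed.

Lemma ltn_sub_count (T : eqType) (p q : pred T) (s : seq T) z :
  subpred p q -> z \in s -> q z -> ~~ p z -> count p s < count q s.
Proof.
move=> pq zs qz pNz; rewrite !(permP (perm_to_rem zs)) /= qz (negbTE pNz) ltnS.
exact: sub_count.
Qed.

Section SkewDiagram.
Variables a b : seq nat.
Local Notation C := (cells a b).
Local Notation n := (skew_size a b).

Definition has_shape (T : tab) : Prop :=
  size T = size a /\
  forall r, r < size a -> size (nth [::] T r) = nth 0 a r - nth 0 b r.

Lemma mem_cells c :
  (c \in C) = (c.1 < size a) && (nth 0 b c.1 < c.2 <= nth 0 a c.1).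
Proof.
case: c => r j /=; apply/flatten_mapP/idP.
  case=> r' /[!mem_iota] r'a /mapP [j' /[!mem_iota] j'r' [-> ->]].
  by apply/andP; split; lia.
move=> /andP[ra /andP[bj ja]]; exists r; rewrite ?mem_iota; first lia.
by apply/mapP; exists j => //; rewrite mem_iota; lia.
Qed.

Lemma uniq_cells : uniq C.
Proof.
apply: allpairs_uniq_dep; first exact: iota_uniq.
  by move=> r _; apply: iota_uniq.
by move=> [x1 x2] [y1 y2] _ _ /= [-> ->].
Qed.

Lemma entry_mkT f c : c \in C -> entry b (mkT a b f) c = f c.
Proof.
case: c => r j; rewrite mem_cells /= => /andP[ra /andP[bj ja]].
rewrite /entry /mkT /= (nth_map 0) ?size_iota // nth_iota // add0n.
rewrite (nth_map 0) ?size_iota; last lia.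
by rewrite nth_iota; last lia; congr f; congr pair; lia.
Qed.

Lemma mkT_shape f : has_shape (mkT a b f).
Proof.
split; first by rewrite size_map size_iota.
by move=> r ra; rewrite (nth_map 0) ?size_iota // size_map size_iota nth_iota.
Qed.

Lemma mkT_entry T : has_shape T -> mkT a b (entry b T) = T.
Proof.
case=> sizeT sizeTr; apply: (@eq_from_nth _ [::]); rewrite size_map size_iota ?sizeT //.
move=> r ra; rewrite (nth_map 0) ?size_iota // nth_iota // add0n.
apply: (@eq_from_nth _ 0); rewrite size_map size_iota ?sizeTr //.
by move=> k kr; rewrite (nth_map 0) ?size_iota // nth_iota // /entry /=; congr nth; lia.
Qed.

Lemma eq_in_mkT f g : {in C, f =1 g} -> mkT a b f = mkT a b g.
Proof.
move=> fg; apply/eq_in_map => r; rewrite mem_iota => /andP[_ ra].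
apply/eq_in_map => j; rewrite mem_iota => /andP[bj ja].
by apply: fg; rewrite mem_cells /=; apply/andP; split; lia.
Qed.

Lemma flatten_mkT f : flatten (mkT a b f) = map f C.
Proof.
rewrite /cells map_flatten -map_comp; congr flatten; apply: eq_map => r /=.
by rewrite -map_comp.
Qed.

Lemma rows_increasingP T : has_shape T ->
  reflect (forall c d, c \in C -> d \in C -> c.1 = d.1 -> c.2 < d.2 ->
             entry b T c < entry b T d)
          (rows_increasing T).
Proof.
case=> sizeT sizeTr; apply: (iffP allP) => [incr | incr row].
  move=> [r j] [r' j'] /[!mem_cells] /= /andP[ra /andP[bj ja]]
    /andP[r'a /andP[bj' ja']] rr'; subst r' => jj'.
  have : sorted ltn (nth [::] T r) by apply: incr; apply: mem_nth; rewrite sizeT.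
  move/(sorted_ltn_nth ltn_trans); rewrite /entry /=; apply; rewrite ?inE ?sizeTr //; lia.
case/(nthP [::]) => r; rewrite sizeT => ra <-.
rewrite sorted_pairwise; last exact: ltn_trans.
apply/(pairwiseP 0) => k l; rewrite !inE sizeTr // => kr lr kl.
have := incr (r, (nth 0 b r).+1 + k) (r, (nth 0 b r).+1 + l).
rewrite /entry /= !addKn; apply => //.
all: rewrite ?mem_cells /=; try (apply/and3P; split); lia.
Qed.

Definition row_standard (T : tab) : Prop := is_filling a b T /\ rows_increasing T.

Section Filling.
Variable T : tab.
Hypothesis fillT : is_filling a b T.
Local Notation f := (entry b T).

Lemma filling_shape : has_shape T.
Proof. by case: fillT. Qed.

Lemma perm_filling : perm_eq (map f C) (iota 1 n).
Proof. by case: fillT => sizeT sizeTr; rewrite -flatten_mkT mkT_entry. Qed.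

Lemma inj_entry : {in C &, injective f}.
Proof.
by apply: uniq_map_inj_in; rewrite (perm_uniq perm_filling) iota_uniq.
Qed.

Lemma entry_range c : c \in C -> 0 < f c <= n.
Proof.
move=> cC; have : f c \in iota 1 n by rewrite -(perm_mem perm_filling) map_f.
by rewrite mem_iota; lia.
Qed.

Definition cell_of (v : nat) : nat * nat := nth (0, 0) C (index v (map f C)).

Lemma cell_ofK v : 0 < v <= n -> cell_of v \in C /\ f (cell_of v) = v.
Proof.
move=> vn; have vT : v \in map f C.
  by rewrite (perm_mem perm_filling) mem_iota; lia.
have iC : index v (map f C) < size C by rewrite -(size_map f) index_mem.
by rewrite mem_nth // -(nth_map _ 0) // nth_index.
Qed.

Lemma entryK : {in C, cancel f cell_of}.
Proof.
move=> c cC; have [c'C fc'] := cell_ofK (entry_range cC).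
exact: inj_entry c'C cC fc'.
Qed.

Lemma entry_count c : c \in C -> f c = (count (fun d => f d < f c) C).+1.
Proof.
move=> cC; have := entry_range cC.
rewrite -(count_map f (fun v => v < f c)) (permP perm_filling) count_lt_iota; lia.
Qed.

Lemma mem_row_entry c r : c \in C -> r < size a -> (f c \in nth [::] T r) = (r == c.1).
Proof.
move=> cC ra; have [sizeT sizeTr] := filling_shape; apply/idP/eqP => [|->].
  case/(nthP 0) => k; rewrite sizeTr // => kr Ek.
  have dC : (r, (nth 0 b r).+1 + k) \in C by rewrite mem_cells /=; apply/and3P; split; lia.
  have /inj_entry : f (r, (nth 0 b r).+1 + k) = f c by rewrite /entry /= addKn.
  by move=> /(_ dC cC) <-.
move: cC; case: c => r0 j; rewrite mem_cells /= => /and3P[r0a bj ja].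
by apply: mem_nth; rewrite sizeTr //=; lia.
Qed.

Lemma rowof_entry c : c \in C -> rowof T (f c) = c.1.
Proof.
move=> cC; have [sizeT _] := filling_shape.
have c1a : c.1 < size a by move: cC; rewrite mem_cells => /andP[].
have has_fc : has (fun row => f c \in row) T.
  by apply/(has_nthP [::]); exists c.1; rewrite ?sizeT // mem_row_entry.
apply/eqP; rewrite -mem_row_entry //; first exact: (nth_find [::] has_fc).
by rewrite -sizeT -has_find.
Qed.

End Filling.
End SkewDiagram.

Definition swap_adj (i v : nat) : nat :=
  if v == i then i.+1 else if v == i.+1 then i else v.

Lemma swap_adjK i : involutive (swap_adj i).
Proof. by move=> v; rewrite /swap_adj; do !case: eqP => //=; lia. Qed.

Lemma ltn_swap_adj i u v :
  (swap_adj i u < swap_adj i v) =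
  if (u == i) && (v == i.+1) then false
  else if (u == i.+1) && (v == i) then true else u < v.
Proof. by rewrite /swap_adj; do !case: eqP => //=; lia. Qed.

Lemma perm_swap_adj_iota i n :
  0 < i < n -> perm_eq (map (swap_adj i) (iota 1 n)) (iota 1 n).
Proof.
move=> i_n; apply: uniq_perm; rewrite ?(map_inj_uniq (can_inj (swap_adjK i))) ?iota_uniq //.
move=> v; rewrite -{1}(swap_adjK i v) (mem_map (can_inj (swap_adjK i))) !mem_iota.
by rewrite /swap_adj; do !case: eqP => //=; lia.
Qed.

Lemma entry_swap b i T c : 0 < i -> entry b (swap_i i T) c = swap_adj i (entry b T c).
Proof.
move=> i_gt0; rewrite /entry /swap_i (@nth_map_dflt _ _ (map (swap_adj i)) [::] [::]) //.
by rewrite (@nth_map_dflt _ _ (swap_adj i) 0 0) // /swap_adj; case: eqP => //; lia.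
Qed.

Section Inversions.
Variables a b : seq nat.
Local Notation C := (cells a b).
Local Notation n := (skew_size a b).

Lemma swap_shape i T : has_shape a b T -> has_shape a b (swap_i i T).
Proof.
case=> sizeT sizeTr; split; first by rewrite size_map.
move=> r ra; rewrite /swap_i (@nth_map_dflt _ _ (map (swap_adj i)) [::] [::]) //.
by rewrite size_map sizeTr.
Qed.

Definition weak_le (T U : tab) : Prop :=
  forall c d, c \in C -> d \in C -> c.1 < d.1 ->
    entry b T c < entry b T d -> entry b U c < entry b U d.

Definition ninv (T : tab) : nat :=
  count (fun p : (nat * nat) * (nat * nat) =>
           (p.1.1 < p.2.1) && (entry b T p.2 < entry b T p.1))
        [seq (c, d) | c <- C, d <- C].

Lemma weak_le_trans T U V : weak_le T U -> weak_le U V -> weak_le T V.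
Proof. by move=> TU UV c d cC dC cd Tcd; apply: UV => //; apply: TU. Qed.

Section AdjacentSwap.
Variables (T : tab) (x y : nat * nat).
Hypotheses (stdT : row_standard a b T) (xC : x \in C) (yC : y \in C).
Hypotheses (yx : y.1 < x.1) (Txy : entry b T y = (entry b T x).+1).
Local Notation f := (entry b T).
Local Notation T' := (swap_i (f x) T).

Let fillT : is_filling a b T := stdT.1.

Let neq_xy c d : c.1 <= d.1 -> (c, d) != (x, y).
Proof. by apply: contraTneq => -[-> ->]; rewrite -ltnNge. Qed.

Let neq_yx c d : d.1 <= c.1 -> (c, d) != (y, x).
Proof. by apply: contraTneq => -[-> ->]; rewrite -ltnNge. Qed.

Lemma ltn_entry_swap c d : c \in C -> d \in C -> (c, d) != (x, y) -> (c, d) != (y, x) ->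
  (entry b T' c < entry b T' d) = (f c < f d).
Proof.
have fx_gt0 : 0 < f x by have := entry_range fillT xC; lia.
have eq_fx e : e \in C -> (f e == f x) = (e == x).
  by move=> eC; apply/eqP/eqP => [/(inj_entry fillT eC xC)|->].
have eq_fy e : e \in C -> (f e == (f x).+1) = (e == y).
  by move=> eC; rewrite -Txy; apply/eqP/eqP => [/(inj_entry fillT eC yC)|->].
move=> cC dC; rewrite !entry_swap // ltn_swap_adj !eq_fx ?eq_fy // -!xpair_eqE.
by move=> /negbTE-> /negbTE->.
Qed.

Lemma ltn_entry_swap_yx : entry b T' y < entry b T' x.
Proof.
have fx_gt0 : 0 < f x by have := entry_range fillT xC; lia.
by rewrite !entry_swap // Txy /swap_adj; do !case: eqP => //; lia.
Qed.

Lemma swap_row_standard : row_standard a b T'.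
Proof.
have shapeT' := swap_shape (f x) (filling_shape fillT).
have fx_n : 0 < f x < n.
  by have := entry_range fillT xC; have := entry_range fillT yC; rewrite Txy; lia.
split; first split; try by case: shapeT'.
  rewrite -(mkT_entry shapeT') flatten_mkT.
  rewrite (eq_map (fun c => @entry_swap b (f x) T c (proj1 (andP fx_n)))) map_comp.
  exact: perm_trans (perm_map _ (perm_filling fillT)) (perm_swap_adj_iota fx_n).
apply/(rows_increasingP shapeT') => c d cC dC cd cd2.
have [_ /(rows_increasingP (filling_shape fillT)) incrT] := stdT.
by rewrite ltn_entry_swap ?neq_xy ?neq_yx ?cd ?incrT.
Qed.

Lemma pi_step_swap : pi_step a b T T'.
Proof.
have := entry_range fillT xC; have := entry_range fillT yC; rewrite Txy => fy_n fx_n.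
exists (f x); split; [lia | lia |].
rewrite /pi_op (rowof_entry fillT xC) -Txy (rowof_entry fillT yC).
by rewrite ltnNge (ltnW yx) /= yx.
Qed.

Lemma weak_le_swap : weak_le T T'.
Proof.
move=> c d cC dC cd Tcd; have [[-> ->]|ne_yx] := eqVneq (c, d) (y, x).
  exact: ltn_entry_swap_yx.
by rewrite ltn_entry_swap ?neq_xy ?(ltnW cd).
Qed.

Lemma weak_le_swap_to U : weak_le T U -> entry b U y < entry b U x -> weak_le T' U.
Proof.
move=> TU Uyx c d cC dC cd; have [[-> ->] //|ne_yx] := eqVneq (c, d) (y, x).
by rewrite ltn_entry_swap ?neq_xy ?(ltnW cd) //; apply: TU.
Qed.

Lemma ninv_swap : ninv T = (ninv T').+1.
Proof.
apply: (count_succ_at (z := (y, x))); rewrite ?allpairs_f //=.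
- apply: allpairs_uniq; try exact: uniq_cells.
  by move=> [? ?] [? ?] _ _ /= [-> ->].
- by rewrite yx Txy /=.
- by rewrite [_ < entry b T' y]ltnNge (ltnW ltn_entry_swap_yx) andbF.
move=> _ /allpairsP [[c d] [/= cC dC ->]] ne_yx /=.
have [[-> ->]|ne_xy] := eqVneq (c, d) (x, y); first by rewrite ltnNge (ltnW yx).
have ne_dc_xy : (d, c) != (x, y) by apply: contraNneq ne_yx => -[-> ->].
have ne_dc_yx : (d, c) != (y, x) by apply: contraNneq ne_xy => -[-> ->].
by rewrite ltn_entry_swap.
Qed.

End AdjacentSwap.
End Inversions.

Section WeakOrder.
Variables a b : seq nat.
Local Notation C := (cells a b).
Local Notation n := (skew_size a b).
Local Notation weak_le := (weak_le a b).
Local Notation ninv := (ninv a b).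
Local Notation row_standard := (row_standard a b).

Lemma pi_step_cases T T' : is_filling a b T -> pi_step a b T T' ->
  T' = T \/ exists x y, [/\ x \in C, y \in C, y.1 < x.1,
    entry b T y = (entry b T x).+1 & T' = swap_i (entry b T x) T].
Proof.
move=> fillT [i [i_gt0 i_n]]; set x := cell_of a b T i; set y := cell_of a b T i.+1.
have [xC Tx] : x \in C /\ entry b T x = i by apply: (cell_ofK fillT); lia.
have [yC Ty] : y \in C /\ entry b T y = i.+1 by apply: (cell_ofK fillT); lia.
rewrite /pi_op -Ty -Tx !(rowof_entry fillT) //.
case: ltnP => [_ [<-] | _]; first by left.
by case: ltnP => // yx [<-]; right; exists x, y; rewrite Tx Ty.
Qed.

Lemma sit_le_weak_le T U : sit_le a b T U -> row_standard T ->
  row_standard U /\ weak_le T U.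
Proof.
elim=> [T0 std0 | T0 T1 T2 step _ IH std0]; first by split.
have [E | [x [y [xC yC yx Txy E]]]] := pi_step_cases std0.1 step; subst T1.
  exact: IH.
have [std2 le12] := IH (swap_row_standard std0 xC yC yx Txy).
by split=> //; apply: weak_le_trans (weak_le_swap std0 xC yC yx Txy) le12.
Qed.

Lemma ninv_weak_le T U : is_filling a b T -> weak_le T U -> ninv U <= ninv T.
Proof.
move=> fillT TU; apply: sub_in_count => _ /allpairsP [[c d] [/= cC dC ->]].
case/andP=> /= cd Udc; rewrite cd /=; rewrite ltnNge leq_eqVlt; apply/negP.
case/orP=> [/eqP/(inj_entry fillT cC dC) Ecd | Tcd]; first by move: cd; rewrite Ecd ltnn.
by move: Udc; rewrite ltnNge (ltnW (TU _ _ cC dC cd Tcd)).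
Qed.

Lemma eq_filling_order T U : is_filling a b T -> is_filling a b U ->
  (forall c d, c \in C -> d \in C -> entry b T c < entry b T d -> entry b U c < entry b U d) ->
  T = U.
Proof.
move=> fillT fillU TU.
rewrite -(mkT_entry (filling_shape fillT)) -(mkT_entry (filling_shape fillU)).
apply: eq_in_mkT => c cC; rewrite (entry_count fillT cC) (entry_count fillU cC).
congr S; apply: eq_in_count => d dC /=; apply/idP/idP; first exact: TU.
case: (ltngtP (entry b T d) (entry b T c)) => // [Tcd | /(inj_entry fillT dC cC) ->].
  by move=> Udc; move: (TU _ _ cC dC Tcd); rewrite ltnNge (ltnW Udc).
by rewrite ltnn.
Qed.

Lemma exists_order_flip T U : is_filling a b T -> is_filling a b U -> T <> U ->
  exists c d, [/\ c \in C, d \in C, entry b T c < entry b T d & entry b U d < entry b U c].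
Proof.
move=> fillT fillU TU.
have /hasP[_ /allpairsP[[c d] [/= cC dC ->]] /andP[Tcd Udc]] :
    has (fun p => (entry b T p.1 < entry b T p.2) && (entry b U p.2 < entry b U p.1))
        [seq (c, d) | c <- C, d <- C].
  apply: contra_notT TU => /hasPn noflip; apply: eq_filling_order => // c d cC dC Tcd.
  have /= := noflip _ (allpairs_f pair cC dC); rewrite Tcd /= -leqNgt leq_eqVlt.
  by case/orP => // /eqP /(inj_entry fillU cC dC) Ecd; move: Tcd; rewrite Ecd ltnn.
by exists c, d.
Qed.

Lemma adjacent_flip_below T U x y : row_standard T -> row_standard U -> weak_le T U ->
  x \in C -> y \in C -> entry b T y = (entry b T x).+1 -> entry b U y < entry b U x ->
  y.1 < x.1.
Proof.
move=> [fillT incT] [fillU incU] TU xC yC Txy Uyx.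
move/(rows_increasingP (filling_shape fillT)): incT => incT.
move/(rows_increasingP (filling_shape fillU)): incU => incU.
have [xy | // | x1y1] := ltngtP x.1 y.1.
  by move: Uyx; rewrite ltnNge ltnW // TU // Txy.
have [x2y2 | y2x2 | x2y2] := ltngtP x.2 y.2.
- by move: Uyx; rewrite ltnNge ltnW // incU.
- by move: (incT _ _ yC xC (esym x1y1) y2x2); rewrite Txy ltnNge leqnSn.
- move: Txy; case: x x1y1 x2y2 {xC Uyx} => x1 x2; case: y {yC} => y1 y2 /= -> ->.
  by move/n_Sn.
Qed.

Lemma exists_adjacent_flip T U : row_standard T -> row_standard U -> weak_le T U -> T <> U ->
  exists x y, [/\ x \in C, y \in C, y.1 < x.1,
    entry b T y = (entry b T x).+1 & entry b U y < entry b U x].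
Proof.
move=> stdT stdU TU /(exists_order_flip stdT.1 stdU.1) [c [d [cC dC Tcd Udc]]].
have [j /andP[cj jd] Uj] : exists2 j, entry b T c <= j < entry b T d &
    entry b U (cell_of a b T j.+1) < entry b U (cell_of a b T j).
  by apply: exists_descent; rewrite ?(ltnW Tcd) // !(entryK stdT.1).
have := entry_range stdT.1 cC; have := entry_range stdT.1 dC => Td_n Tc_n.
have [xC Tx] : cell_of a b T j \in C /\ entry b T (cell_of a b T j) = j.
  by apply: (cell_ofK stdT.1); lia.
have [yC Ty] : cell_of a b T j.+1 \in C /\ entry b T (cell_of a b T j.+1) = j.+1.
  by apply: (cell_ofK stdT.1); lia.
exists (cell_of a b T j), (cell_of a b T j.+1); split; rewrite ?Tx ?Ty //.
by apply: adjacent_flip_below stdT stdU TU xC yC _ Uj; rewrite Tx Ty.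
Qed.

Lemma ninv_weak_lt T U : row_standard T -> row_standard U -> weak_le T U -> T <> U ->
  ninv U < ninv T.
Proof.
move=> stdT stdU TU /(exists_adjacent_flip stdT stdU TU) [x [y [xC yC yx Txy Uyx]]].
rewrite (ninv_swap stdT xC yC yx Txy) ltnS.
apply: ninv_weak_le (swap_row_standard stdT xC yC yx Txy).1 _.
exact: weak_le_swap_to stdT xC yC yx Txy U TU Uyx.
Qed.

Lemma weak_le_anti T U : row_standard T -> row_standard U ->
  weak_le T U -> weak_le U T -> T = U.
Proof.
move=> stdT stdU TU UT; have [// | /eqP neTU] := eqVneq T U.
have := ninv_weak_lt stdT stdU TU neTU.
by rewrite ltnNge ltnW // (ninv_weak_lt stdU stdT UT (nesym neTU)).
Qed.

Lemma weak_le_sit_le T U : row_standard T -> row_standard U -> weak_le T U ->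
  sit_le a b T U.
Proof.
move: {2}(ninv T) (leqnn (ninv T)) => m.
elim: m T => [|m IH] T ninvT stdT stdU TU; have [-> | /eqP neTU] := eqVneq T U;
  try exact: sit_le_refl.
  by have := ninv_weak_lt stdT stdU TU neTU; lia.
have [x [y [xC yC yx Txy Uyx]]] := exists_adjacent_flip stdT stdU TU neTU.
apply: sit_le_step (pi_step_swap stdT xC yC yx Txy) _.
apply: IH (swap_row_standard stdT xC yC yx Txy) stdU _.
  by move: ninvT; rewrite (ninv_swap stdT xC yC yx Txy).
exact: weak_le_swap_to stdT xC yC yx Txy U TU Uyx.
Qed.

Lemma sit_leP T U : row_standard T -> row_standard U -> sit_le a b T U <-> weak_le T U.
Proof.
move=> stdT stdU; split; last exact: weak_le_sit_le.
by move/sit_le_weak_le => /(_ stdT) [].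
Qed.

End WeakOrder.

Section RankFilling.
Variables (a b : seq nat) (lt : rel (nat * nat)).
Hypotheses (lt_irr : irreflexive lt) (lt_trans : transitive lt).
Hypothesis lt_total : forall c d, c != d -> lt c d || lt d c.
Local Notation C := (cells a b).
Local Notation n := (skew_size a b).

Definition rank c : nat := (count (lt^~ c) C).+1.

Lemma ltn_rank c d : c \in C -> d \in C -> (rank c < rank d) = lt c d.
Proof.
have rank_lt e f : e \in C -> lt e f -> rank e < rank f.
  move=> eC ef; rewrite ltnS; apply: (ltn_sub_count (z := e)) => //=.
  - by move=> g /= ge; apply: lt_trans ef.
  - by rewrite lt_irr.
move=> cC dC; apply/idP/idP; last exact: rank_lt.
have [-> | ncd] := eqVneq c d; first by rewrite ltnn.
by case/orP: (lt_total ncd) => // /(rank_lt _ _ dC) dc /(ltn_trans dc); rewrite ltnn.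
Qed.

Lemma perm_rank : perm_eq (map rank C) (iota 1 n).
Proof.
have uniq_rank : uniq (map rank C).
  rewrite map_inj_in_uniq ?uniq_cells // => c d cC dC Ecd; apply/eqP/negP => /negP ncd.
  by case/orP: (lt_total ncd); rewrite -ltn_rank // Ecd ltnn.
have rank_iota : {subset map rank C <= iota 1 n}.
  move=> _ /mapP [c cC ->]; rewrite mem_iota add1n ltnS /rank /skew_size -count_predT.
  by apply: (ltn_sub_count (z := c)) => //=; rewrite lt_irr.
have size_rank : size (iota 1 n) <= size (map rank C) by rewrite size_map size_iota.
have [_ mem_rank] := uniq_min_size uniq_rank rank_iota size_rank.
by apply: uniq_perm; rewrite ?iota_uniq.
Qed.

Lemma rank_row_standard : (forall c d, c.1 = d.1 -> c.2 < d.2 -> lt c d) ->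
  row_standard a b (mkT a b rank).
Proof.
move=> lt_row; split; first split; try by case: (mkT_shape a b rank).
  by rewrite flatten_mkT; exact: perm_rank.
apply/(rows_increasingP (mkT_shape a b rank)) => c d cC dC cd cd2.
by rewrite !entry_mkT // ltn_rank // lt_row.
Qed.

End RankFilling.

(* [S_col a b] and [S_row a b] are convertible to [mkT a b (rank a b ltc)] and
   [mkT a b (rank a b ltr)]. *)
Definition ltc (d c : nat * nat) : bool := (d.2 < c.2) || ((d.2 == c.2) && (d.1 < c.1)).
Definition ltr (d c : nat * nat) : bool := (d.1 < c.1) || ((d.1 == c.1) && (d.2 < c.2)).

Lemma ltc_irr : irreflexive ltc. Proof. by case=> x1 x2; rewrite /ltc /=; lia. Qed.
Lemma ltc_trans : transitive ltc.
Proof. by move=> [x1 x2] [y1 y2] [z1 z2]; rewrite /ltc /=; lia. Qed.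
Lemma ltc_total c d : c != d -> ltc c d || ltc d c.
Proof. by case: c d => [x1 x2] [y1 y2]; rewrite /ltc /= xpair_eqE; lia. Qed.

Lemma ltr_irr : irreflexive ltr. Proof. by case=> x1 x2; rewrite /ltr /=; lia. Qed.
Lemma ltr_trans : transitive ltr.
Proof. by move=> [x1 x2] [y1 y2] [z1 z2]; rewrite /ltr /=; lia. Qed.
Lemma ltr_total c d : c != d -> ltr c d || ltr d c.
Proof. by case: c d => [x1 x2] [y1 y2]; rewrite /ltr /= xpair_eqE; lia. Qed.

Section ReadingTableaux.
Variables a b : seq nat.
Local Notation C := (cells a b).

Lemma ltn_S_col c d : c \in C -> d \in C ->
  (entry b (S_col a b) c < entry b (S_col a b) d) = ltc c d.
Proof.
move=> cC dC; rewrite !(@entry_mkT a b (rank a b ltc)) //.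
exact: (ltn_rank ltc_irr ltc_trans ltc_total).
Qed.

Lemma ltn_S_row c d : c \in C -> d \in C ->
  (entry b (S_row a b) c < entry b (S_row a b) d) = ltr c d.
Proof.
move=> cC dC; rewrite !(@entry_mkT a b (rank a b ltr)) //.
exact: (ltn_rank ltr_irr ltr_trans ltr_total).
Qed.

Lemma S_col_row_standard : row_standard a b (S_col a b).
Proof.
apply: rank_row_standard; [exact: ltc_irr | exact: ltc_trans | exact: ltc_total |].
by move=> [x1 x2] [y1 y2]; rewrite /ltc /=; lia.
Qed.

Lemma S_row_row_standard : row_standard a b (S_row a b).
Proof.
apply: rank_row_standard; [exact: ltr_irr | exact: ltr_trans | exact: ltr_total |].
by move=> [x1 x2] [y1 y2]; rewrite /ltr /=; lia.
Qed.

Lemma weak_le_S_row T : weak_le a b T (S_row a b).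
Proof. by move=> c d cC dC cd _; rewrite ltn_S_row // /ltr cd. Qed.

Lemma ninv_S_row : ninv a b (S_row a b) = 0.
Proof.
apply/eqP; rewrite -leqn0 leqNgt -has_count; apply/hasPn.
move=> _ /allpairsP [[c d] [/= cC dC ->]] /=.
by rewrite ltn_S_row // /ltr; case: ltngtP.
Qed.

End ReadingTableaux.

Section ExtendedTableaux.
Variables a b : seq nat.
Local Notation C := (cells a b).
Local Notation n := (skew_size a b).
Local Notation S_col := (S_col a b).
Local Notation S_row := (S_row a b).
Local Notation weak_le := (weak_le a b).
Local Notation ninv := (ninv a b).
Local Notation row_standard := (row_standard a b).

(* Given increasing rows, [T (r, j) < T (r', j')] for [r < r'], [j <= j'] follows
   from the column condition through the cell [(r', j)], which lies in the
   diagram because [b] is weakly decreasing. *)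
Lemma SET_weak_le T : is_partition b ->
  SET a b T <-> row_standard T /\ weak_le S_col T.
Proof.
move=> part_b; split => [[fillT incT colT] | [[fillT incT] colT]]; last first.
  split=> // c d cC dC cd2 cd; apply: colT => //.
  by rewrite ltn_S_col // /ltc cd2 eqxx cd orbT.
split=> // -[r j] [r' j'] cC dC /= rr'; rewrite ltn_S_col // /ltc /= => jj'.
have jj'_le : j <= j' by case/orP: jj' => [/ltnW | /andP[/eqP-> _]].
have eC : (r', j) \in C.
  move: cC dC; rewrite !mem_cells /= => /and3P[_ bj _] /and3P[r'a bj' ja'].
  have := sorted_geq_nth part_b (ltnW rr'); rewrite r'a /=; lia.
apply: (@leq_trans (entry b T (r', j))); first exact: colT.
move: jj'_le; rewrite leq_eqVlt => /orP[/eqP <- // | jj'_lt].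
by apply: ltnW; apply: (elimT (rows_increasingP (filling_shape fillT)) incT).
Qed.

Lemma SET_SIT T : composition a -> SET a b T -> SIT a b T.
Proof.
move=> comp_a [fillT incT colT]; split => // r r' rr' r'a br br'.
have a_gt0 k : k < size a -> 0 < nth 0 a k by move=> ka; move/all_nthP: comp_a; apply.
by apply: colT; rewrite // mem_cells /= ?br ?br' ?a_gt0 //; lia.
Qed.

Lemma exists_chain_to_S_row T : row_standard T ->
  exists s, [/\ size s = ninv T,
    (forall U, U \in s -> row_standard U /\ weak_le T U) & strict_chain a b (T :: s)].
Proof.
move: {2}(ninv T) (erefl (ninv T)) => m; elim: m T => [|m IH] T ninvT stdT.
  by exists [::].
have neT : T <> S_row by move=> ET; move: ninvT; rewrite ET ninv_S_row.
have [x [y [xC yC yx Txy _]]] :=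
  exists_adjacent_flip stdT (S_row_row_standard a b) (@weak_le_S_row a b T) neT.
set T' := swap_i (entry b T x) T.
have stdT' : row_standard T' := swap_row_standard stdT xC yC yx Txy.
have TT' : weak_le T T' := weak_le_swap stdT xC yC yx Txy.
have ninvT' : ninv T = (ninv T').+1 := ninv_swap stdT xC yC yx Txy.
have [s [size_s std_s chain_s]] : exists s, [/\ size s = ninv T',
    forall U, U \in s -> row_standard U /\ weak_le T' U & strict_chain a b (T' :: s)].
  by apply: IH stdT'; move: ninvT; rewrite ninvT' => -[].
exists (T' :: s); split => /=; first by rewrite size_s.
  move=> U; rewrite inE => /predU1P[-> // | /std_s [stdU T'U]].
  by split=> //; apply: weak_le_trans T'U.
split=> //; split; first exact: sit_le_step (pi_step_swap stdT xC yC yx Txy) (sit_le_refl _ _ _).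
by move=> ET; move: ninvT'; rewrite -ET; lia.
Qed.

Lemma strict_chain_size T s : (forall U, U \in T :: s -> row_standard U) ->
  strict_chain a b (T :: s) -> size s <= ninv T.
Proof.
elim: s T => [//|U s IH] T std_s [[TU neTU] chain_s] /=.
have stdT : row_standard T by apply: std_s; rewrite mem_head.
have stdU : row_standard U by apply: std_s; rewrite !inE eqxx orbT.
have ninvUT := ninv_weak_lt stdT stdU ((sit_leP stdT stdU).1 TU) neTU.
apply: leq_ltn_trans ninvUT; apply: IH chain_s => V V_s.
by apply: std_s; rewrite inE V_s orbT.
Qed.

Lemma SET_rank_S_col : is_partition b -> SET_rank a b (ninv S_col).
Proof.
move=> part_b; split.
  have [s [size_s le_s chain_s]] := exists_chain_to_S_row (S_col_row_standard a b).
  exists (S_col :: s); split; rewrite /= ?size_s //.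
  move=> U; rewrite inE => /predU1P[-> | /le_s le_U]; apply/(SET_weak_le _ part_b) => //.
  by split; [exact: S_col_row_standard | move].
case=> [// | T s] SET_s chain_s /=; rewrite ltnS.
have std_s U : U \in T :: s -> row_standard U by move/SET_s/(SET_weak_le _ part_b) => [].
apply: leq_trans (strict_chain_size std_s chain_s) _.
have [_ le_T] := (SET_weak_le _ part_b).1 (SET_s T (mem_head _ _)).
exact: ninv_weak_le (S_col_row_standard a b).1 le_T.
Qed.

(* For distinct cells, either one lies weakly southwest of the other
   (counted by [ls]) or one lies strictly northwest of the other (an
   inversion of [S_col]), and never both. *)
Lemma ninv_S_col_add_ls : ninv S_col + \sum_(c <- C) ls a b c = 'C(n, 2).
Proof.
pose nw c d := (c.1 < d.1) && (d.2 < c.2).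
pose sw c d := [&& d != c, d.1 <= c.1 & d.2 <= c.2].
rewrite /ninv count_allpairs -big_split /=.
rewrite (eq_big_seq (fun c => count (fun d => nw c d || sw c d) C)); last first.
  move=> c cC /=; rewrite /ls -[RHS]addn0.
  rewrite (eq_in_count (a1 := fun d => (c.1 < d.1) && _) (a2 := nw c)); last first.
    by move=> d dC /=; rewrite ltn_S_col // /ltc /nw; case: ltngtP => //= _; lia.
  rewrite -count_predUI (eq_count (a1 := predI _ _) (a2 := pred0)) ?count_pred0 //.
  by move=> d; rewrite /nw /sw /=; case: d c {cC} => [y1 y2] [x1 x2] /=; lia.
apply: sum_count_tournament; first exact: uniq_cells.
  by case=> x1 x2; rewrite /nw /sw /= eqxx ltnn.
by move=> [x1 x2] [y1 y2]; rewrite /nw /sw /= !xpair_eqE; lia.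
Qed.

End ExtendedTableaux.

Theorem corollary4p3 (a b : seq nat) :
  composition a -> composition b -> subcomp b a -> reduced a b ->
  is_partition b ->
  [/\ SET_minimal a b (S_col a b),
      (forall T, SET_minimal a b T -> T = S_col a b),
      (forall T, SET a b T <->
         [/\ SIT a b T, sit_le a b (S_col a b) T & sit_le a b T (S_row a b)])
    & exists r, SET_rank a b r /\
        r + \sum_(c <- cells a b) ls a b c = 'C(skew_size a b, 2)].
Proof.
move=> comp_a _ _ _ part_b.
have std_col := S_col_row_standard a b; have std_row := S_row_row_standard a b.
have SETP T := @SET_weak_le a b T part_b.
have le_col T : SET a b T -> sit_le a b (S_col a b) T.
  by case/SETP => stdT le_T; apply/(sit_leP std_col stdT).
have min_col : SET_minimal a b (S_col a b).
  split=> [|T /SETP[stdT le_T] /(sit_leP stdT std_col) le_T']; first by apply/SETP; split.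
  exact: weak_le_anti stdT std_col le_T' le_T.
split=> //.
- by move=> T [SET_T min_T]; apply/esym/min_T; [case: min_col | exact: le_col].
- move=> T; split=> [SET_T | [[fillT incT _] /(sit_leP std_col (conj fillT incT)) le_T _]].
    split; [exact: SET_SIT | exact: le_col |].
    by apply/(sit_leP _ std_row); [case/SETP: SET_T | exact: weak_le_S_row].
  exact/SETP.
- by exists (ninv a b (S_col a b)); split; [exact: SET_rank_S_col | exact: ninv_S_col_add_ls].
Qed.
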